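(* Let $w\in C_b^2(\mathbb{R})$ be nowhere vanishing and $\theta:=\frac{w_x}{w}$. Suppose that $\inf_{x\in\mathbb{R}}\big(-\theta'(x)+\theta^2(x)\big)\ge\kappa_0>0$ and that there exists $\hat x\in\mathbb{R}$ with $\theta(\hat x)=0$. Then $$\int_{\mathbb{R}}h^2w^2\,dx\le\frac{1}{\kappa_0}\int_{\mathbb{R}}h_x^2w^2\,dx$$ for every $h\in C_b^1(\mathbb{R})$ with $h(\hat x)=0$.
   Context: $C_b^k(\mathbb{R})$ denotes $k$ times continuously differentiable functions which are bounded together with their derivatives up to order $k$. *)

From HB Require Import structures.
From mathcomp Require Import all_boot all_order all_algebra.
From mathcomp Require Import all_classical all_reals all_analysis.
Set Implicit Arguments. Unset Strict Implicit. Unset Printing Implicit Defensive.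
Import Order.TTheory GRing.Theory Num.Theory.
Import numFieldNormedType.Exports.
Local Open Scope ring_scope.

Definition bounded_fun (R : realType) (f : R -> R) : Prop :=
  exists M : R, forall x, `|f x| <= M.

Definition Cb1 (R : realType) (f : R -> R) : Prop :=
  [/\ (forall x, derivable f x 1), continuous (derive1 f),
      bounded_fun f & bounded_fun (derive1 f)].

Definition Cb2 (R : realType) (f : R -> R) : Prop :=
  Cb1 f /\ Cb1 (derive1 f).

(* With theta = w'/w, g = h w and f = h' w, the weighted primitive
   u = (int_c^t w^2 h - K) / w solves u' = g - theta u, and the Lyapunov function
   Psi = theta u^2 - 2 g u satisfies
     f^2/kappa0 - g^2 - Psi' = (f + kappa0 u)^2/kappa0 + (g - theta u)^2
                               + (- theta' + theta^2 - kappa0) u^2 >= 0.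
   Integrating, int_a^b g^2 <= kappa0^-1 int_a^b f^2 whenever Psi(a) = Psi(b).
   Choosing K so that u vanishes at the far endpoint, and since
   theta(xhat) = h(xhat) = 0, Psi vanishes at both ends of [xhat - n, xhat] and
   of [xhat, xhat + n]; monotone convergence lets n go to infinity. *)

From HB Require Import structures.
From mathcomp Require Import all_boot all_order all_algebra.
From mathcomp Require Import all_classical all_reals all_analysis.
From mathcomp Require Import ring lra.
From mathcomp Require Import measurable_realfun.
Import Order.TTheory GRing.Theory Num.Theory.
Import numFieldNormedType.Exports.
Local Open Scope ring_scope.
Local Open Scope classical_set_scope.

Lemma lyapunov_rate_le {R : realFieldType} (k f g th dth u : R) :
  0 < k -> k <= - dth + th ^+ 2 ->
  dth * u ^+ 2 + 2 * th * u * (g - th * u) - 2 * (f + th * g) * u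
    - 2 * g * (g - th * u) <= f ^+ 2 / k - g ^+ 2.
Proof.
move=> k_gt0 hk; rewrite -subr_ge0.
have -> : f ^+ 2 / k - g ^+ 2 - (dth * u ^+ 2 + 2 * th * u * (g - th * u)
    - 2 * (f + th * g) * u - 2 * g * (g - th * u))
  = (f + k * u) ^+ 2 / k + (g - th * u) ^+ 2 + (- dth + th ^+ 2 - k) * u ^+ 2.
  by field; rewrite gt_eqF.
have k_ge0 : 0 <= k by exact: ltW.
have := sqr_ge0 (g - th * u).
have : 0 <= (f + k * u) ^+ 2 / k by rewrite divr_ge0 ?sqr_ge0.
have : 0 <= (- dth + th ^+ 2 - k) * u ^+ 2 by rewrite mulr_ge0 ?sqr_ge0 ?subr_ge0.
lra.
Qed.

Section real_calculus.
Context {R : realType}.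
Implicit Types (f g p : R -> R) (a b c x : R).

Lemma derivable_continuous {f} : (forall x, derivable f x 1) -> continuous f.
Proof.
by move=> df x; apply: differentiable_continuous; apply/derivable1_diffP.
Qed.

Lemma derivable1_is_derive {f x} : derivable f x 1 -> is_derive x 1 f (derive1 f x).
Proof. by rewrite derive1E; exact: derivableP. Qed.

Lemma continuous_sqr {f} : continuous f -> continuous (fun x => f x ^+ 2).
Proof. by move=> cf x; apply: continuous_comp (cf x) (@exprn_continuous R 2 (f x)). Qed.

Lemma continuous_sqrM {f g} : continuous f -> continuous g ->
  continuous (fun x => f x ^+ 2 * g x ^+ 2).
Proof.
by move=> cf cg x; exact: continuousM (continuous_sqr cf x) (continuous_sqr cg x).
Qed.

Lemma continuous_integrable_itv p a b : continuous p ->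
  lebesgue_measure.-integrable `[a, b] (EFin \o p).
Proof.
move=> cp; apply: continuous_compact_integrable; first exact: segment_compact.
exact: continuous_subspaceT.
Qed.

Lemma Rintegral_itv_split {p a c b} : continuous p -> a <= c -> c <= b ->
  \int[lebesgue_measure]_(x in `[a, b]) p x =
  \int[lebesgue_measure]_(x in `[a, c]) p x +
  \int[lebesgue_measure]_(x in `[c, b]) p x.
Proof.
move=> cp ac cb.
have := Rintegral_itvB (continuous_integrable_itv p a b cp).
move=> /(_ c); rewrite !bnd_simp => /(_ ac cb) split_ab.
rewrite -(@Rintegral_itv_obnd_cbnd _ c); first by rewrite -split_ab addrC subrK.
apply: integrableS (continuous_integrable_itv p c b cp) => //.
by apply: subset_itvr; rewrite bnd_simp.
Qed.

Lemma is_derive_Rintegral_itv {p c x} : continuous p -> c < x ->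
  is_derive x 1 (fun t => \int[lebesgue_measure]_(s in `[c, t]) p s) (p x).
Proof.
move=> cp cx; have x_lt : x < x + 1 by rewrite ltrDl.
have [dF <-] := continuous_FTC1_closed x_lt (continuous_integrable_itv p c (x + 1) cp) cx (cp x).
by rewrite derive1E; apply: derivableP.
Qed.

Lemma EFin_Rintegral_itv p a b : continuous p ->
  (\int[lebesgue_measure]_(x in `[a, b]) p x)%:E =
  (\int[lebesgue_measure]_(x in `[a, b]) (p x)%:E)%E.
Proof.
move=> cp; rewrite /Rintegral fineK //.
exact/integrable_fin_num/continuous_integrable_itv.
Qed.

End real_calculus.

Definition log_derivative {R : realType} (w : R -> R) (x : R) : R :=
  derive1 w x / w x.

Lemma derivable_log_derivative {R : realType} (w : R -> R) (x : R) :
  derivable w x 1 -> derivable (derive1 w) x 1 -> w x != 0 ->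
  derivable (log_derivative w) x 1.
Proof. by move=> dw ddw w0; apply: derivableM => //; exact: derivableV. Qed.

Section weighted_poincare.
Context {R : realType} {w h : R -> R} {k : R}.
Hypotheses (w_derivable : forall x, derivable w x 1)
  (h_derivable : forall x, derivable h x 1)
  (w_neq0 : forall x, w x != 0)
  (theta_derivable : forall x, derivable (log_derivative w) x 1)
  (dh_continuous : continuous (derive1 h))
  (k_gt0 : 0 < k)
  (k_le : forall x,
    k <= - derive1 (log_derivative w) x + log_derivative w x ^+ 2).

Local Notation theta := (log_derivative w).

Let w_continuous : continuous w := derivable_continuous w_derivable.
Let h_continuous : continuous h := derivable_continuous h_derivable.

Definition poincare_defect (x : R) : R :=
  derive1 h x ^+ 2 * w x ^+ 2 / k - h x ^+ 2 * w x ^+ 2.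

Section lyapunov.
Variables (c K : R).

Definition weighted_primitive (t : R) : R :=
  (\int[lebesgue_measure]_(s in `[c, t]) (w s ^+ 2 * h s) - K) / w t.

Local Notation u := weighted_primitive.

Definition lyapunov (t : R) : R := theta t * u t ^+ 2 - 2 * (h t * w t) * u t.

Lemma is_derive_weighted_primitive x : c < x ->
  is_derive x 1 u (h x * w x - theta x * u x).
Proof.
move=> cx.
have w2h_continuous : continuous (fun s => w s ^+ 2 * h s).
  by move=> s; exact: (continuousM (continuous_sqr w_continuous s) (h_continuous s)).
have dF := is_derive_Rintegral_itv w2h_continuous cx.
have dw := derivable1_is_derive (w_derivable x).
have dVw := is_deriveV (w_neq0 x) dw.
rewrite /weighted_primitive; apply: is_derive_eq.
by rewrite /log_derivative /GRing.scale /=; field.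
Qed.

Lemma lyapunov_derivative_le x : c < x ->
  exists2 d, is_derive x 1 lyapunov d & d <= poincare_defect x.
Proof.
move=> cx.
have du := is_derive_weighted_primitive x cx.
have dw := derivable1_is_derive (w_derivable x).
have dh := derivable1_is_derive (h_derivable x).
have dth := derivable1_is_derive (theta_derivable x).
pose f := derive1 h x * w x; pose g := h x * w x.
exists (derive1 theta x * u x ^+ 2 + 2 * theta x * u x * (g - theta x * u x)
    - 2 * (f + theta x * g) * u x - 2 * g * (g - theta x * u x)).
  rewrite /lyapunov; apply: is_derive_eq.
  by rewrite /f /g /log_derivative /GRing.scale /=; field.
apply: le_trans (lyapunov_rate_le _ f g _ _ (u x) k_gt0 (k_le x)) _.
by rewrite /poincare_defect /f /g !exprMn.
Qed.

Lemma lyapunov_sub_le a b : c < a -> a <= b ->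
  lyapunov b - lyapunov a <=
  \int[lebesgue_measure]_(x in `[a, b]) poincare_defect x.
Proof.
move=> ca ab.
have defect_continuous : continuous poincare_defect.
  move=> x; apply: cvgB; last exact: continuous_sqrM.
  by apply: cvgM; [exact: continuous_sqrM|exact: cvg_cst].
pose D t := \int[lebesgue_measure]_(s in `[c, t]) poincare_defect s - lyapunov t.
have dD x : c < x -> exists2 d, is_derive x 1 D d & 0 <= d.
  move=> cx; have [d dL dL_le] := lyapunov_derivative_le x cx.
  exists (poincare_defect x - d); last by rewrite subr_ge0.
  exact: is_deriveB (is_derive_Rintegral_itv defect_continuous cx) dL.
have : D a <= D b.
  apply: (@ger0_derive1_ndecr R D a b) => //.
  - move=> x; rewrite in_itv /= => /andP[ax _].
    by have [d [dD_x _] _] := dD x (lt_trans ca ax).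
  - move=> x; rewrite in_itv /= => /andP[ax _].
    by have [d [_ <-]] := dD x (lt_trans ca ax); rewrite derive1E.
  - apply: continuous_in_subspaceT => x; rewrite inE /= in_itv /= => /andP[ax _].
    have [d [dD_x _] _] := dD x (lt_le_trans ca ax).
    by apply: differentiable_continuous; apply/derivable1_diffP.
rewrite /D (Rintegral_itv_split defect_continuous (ltW ca) ab).
lra.
Qed.

End lyapunov.

Lemma weighted_poincare_of_lyapunov c K a b : c < a -> a <= b ->
  lyapunov c K a = lyapunov c K b ->
  \int[lebesgue_measure]_(x in `[a, b]) (h x ^+ 2 * w x ^+ 2) <=
  k^-1 * \int[lebesgue_measure]_(x in `[a, b]) (derive1 h x ^+ 2 * w x ^+ 2).
Proof.
move=> ca ab lyap_eq.
have := lyapunov_sub_le c K a b ca ab; rewrite lyap_eq subrr /poincare_defect.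
have dhw_continuous := continuous_sqrM dh_continuous w_continuous.
have hw_continuous := continuous_sqrM h_continuous w_continuous.
rewrite RintegralB ?RintegralZr ?subr_ge0 1?mulrC //.
all: apply: continuous_integrable_itv => //.
by move=> x; apply: cvgM; [exact: dhw_continuous|exact: cvg_cst].
Qed.

Lemma weighted_poincare_itv_endpoint a b : a <= b ->
  (theta a = 0 /\ h a = 0) \/ (theta b = 0 /\ h b = 0) ->
  \int[lebesgue_measure]_(x in `[a, b]) (h x ^+ 2 * w x ^+ 2) <=
  k^-1 * \int[lebesgue_measure]_(x in `[a, b]) (derive1 h x ^+ 2 * w x ^+ 2).
Proof.
have a1_lt : a - 1 < a by rewrite ltrBlDr ltrDl.
(* The primitive is based at a - 1 < a since the FTC is only used at points
   strictly to the right of the base point. *)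
pose F t := \int[lebesgue_measure]_(s in `[a - 1, t]) (w s ^+ 2 * h s).
have u_vanish t : weighted_primitive (a - 1) (F t) t = 0.
  by rewrite /weighted_primitive -/(F t) subrr mul0r.
move=> ab [[th0 h0]|[th0 h0]].
- apply: (weighted_poincare_of_lyapunov (a - 1) (F b)) => //.
  by rewrite /lyapunov u_vanish th0 h0 !(mul0r, mulr0, subr0, expr0n).
- apply: (weighted_poincare_of_lyapunov (a - 1) (F a)) => //.
  by rewrite /lyapunov u_vanish th0 h0 !(mul0r, mulr0, subr0, expr0n).
Qed.

Lemma weighted_poincare_itv {a x0 b} : a <= x0 -> x0 <= b ->
  theta x0 = 0 -> h x0 = 0 ->
  \int[lebesgue_measure]_(x in `[a, b]) (h x ^+ 2 * w x ^+ 2) <=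
  k^-1 * \int[lebesgue_measure]_(x in `[a, b]) (derive1 h x ^+ 2 * w x ^+ 2).
Proof.
move=> ax0 x0b th0 h0.
have dhw_continuous := continuous_sqrM dh_continuous w_continuous.
have hw_continuous := continuous_sqrM h_continuous w_continuous.
rewrite (Rintegral_itv_split hw_continuous ax0 x0b).
rewrite (Rintegral_itv_split dhw_continuous ax0 x0b) mulrDr.
by apply: lerD; apply: weighted_poincare_itv_endpoint; auto.
Qed.

End weighted_poincare.

Lemma ge0_integral_setT_le_of_itv {R : realType} (f g : R -> R) (x0 C : R) :
  continuous f -> continuous g ->
  (forall x, 0 <= f x) -> (forall x, 0 <= g x) -> 0 <= C ->
  (forall n : nat,
    \int[lebesgue_measure]_(x in `[x0 - n%:R, x0 + n%:R]) f x <=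
    C * \int[lebesgue_measure]_(x in `[x0 - n%:R, x0 + n%:R]) g x) ->
  (\int[lebesgue_measure]_(x in [set: R]) (f x)%:E <=
   C%:E * \int[lebesgue_measure]_(x in [set: R]) (g x)%:E)%E.
Proof.
move=> cf cg f_ge0 g_ge0 C_ge0 le_itv.
pose A (n : nat) := `[x0 - n%:R, x0 + n%:R] : set R.
have mA n : measurable (A n) by exact: measurable_itv.
have A_nd : nondecreasing_seq A.
  apply/nondecreasing_seqP => n; rewrite subsetEset; apply: subset_itv;
    rewrite bnd_simp -natr1; lra.
have A_cover : \bigcup_n A n = [set: R].
  apply/seteqP; split => // x _.
  exists (Num.Def.archi_bound `|x - x0|) => //.
  have := archi_boundP (normr_ge0 (x - x0)).
  by rewrite /A /= in_itv /= => /ltW; rewrite ler_distl => /andP[-> ->].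
have mf n : measurable_fun (A n) (EFin \o f).
  by apply/measurable_EFinP; exact: measurable_funS (continuous_measurable_fun cf).
have f0 n x : A n x -> (0 <= (f x)%:E)%E by rewrite lee_fin.
have := ge0_nondecreasing_set_cvg_integral (mu := lebesgue_measure) A_nd mA mf f0.
rewrite A_cover => cvg_f.
rewrite -(cvg_lim _ cvg_f) //.
apply: lime_le; first by apply/cvg_ex; eexists; exact: cvg_f.
apply: nearW => n.
apply: (@le_trans _ _ (C%:E * \int[lebesgue_measure]_(x in A n) (g x)%:E)%E).
  by rewrite /A -!EFin_Rintegral_itv // -EFinM lee_fin.
apply: lee_wpmul2l; first by rewrite lee_fin.
apply: ge0_subset_integral => //; first exact: measurable_itv.
- by apply/measurable_EFinP; exact: continuous_measurable_fun.
- by move=> x _; rewrite lee_fin.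
Qed.

Theorem proposition5p5 (R : realType) (w : R -> R) (kappa0 : R) (xhat : R) :
  Cb2 w ->
  (forall x, w x != 0) ->
  0 < kappa0 ->
  (forall x, kappa0 <= - derive1 (fun y => derive1 w y / w y) x + (derive1 w x / w x) ^+ 2) ->
  derive1 w xhat / w xhat = 0 ->
  forall h : R -> R, Cb1 h -> h xhat = 0 ->
  (\int[lebesgue_measure]_(x in [set: R]) ((h x) ^+ 2 * (w x) ^+ 2)%:E <=
   (kappa0^-1)%:E * \int[lebesgue_measure]_(x in [set: R]) ((derive1 h x) ^+ 2 * (w x) ^+ 2)%:E)%E.
Proof.
move=> [[w_der _ _ _] [dw_der _ _ _]] w_neq0 k_gt0 k_le th0 h [h_der dh_cont _ _] h0.
have th_der x : derivable (log_derivative w) x 1.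
  exact: derivable_log_derivative.
have w_cont := derivable_continuous w_der.
have h_cont := derivable_continuous h_der.
apply: (ge0_integral_setT_le_of_itv _ _ xhat).
- exact: continuous_sqrM.
- exact: continuous_sqrM.
- by move=> x; rewrite mulr_ge0 ?sqr_ge0.
- by move=> x; rewrite mulr_ge0 ?sqr_ge0.
- by rewrite invr_ge0 ltW.
move=> n; apply: (weighted_poincare_itv w_der h_der w_neq0 th_der dh_cont k_gt0 k_le _ _ th0 h0).
- by rewrite lerBlDr lerDl.
- by rewrite lerDl.
Qed.
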